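(* Let $(\mathbf L,\mathbf R)$ and $(\mathbf L',\mathbf R')$ be two pairs ($k\times n$ and $n\times k$, entries in a field $K$) with all maximal minors of $\mathbf R$ and of $\mathbf R'$ nonzero and with the same minor products: $h(\mathcal J):=\Delta_{\mathbf L}(\mathcal J)\Delta_{\mathbf R}(\mathcal J)=\Delta_{\mathbf L'}(\mathcal J)\Delta_{\mathbf R'}(\mathcal J)$ for all $\mathcal J\in\wp_k[n]$. Fix $\mathcal I\in\wp_k[n]$ with $h(\mathcal I)\ne0$, and suppose there exists an observable set $\chi(\mathcal I\mid^{ij}_{\alpha\beta})$ whose polynomial $F^{ij}_{\alpha\beta}$ has two distinct roots. If $Y_{\mathbf R}(\mathcal I)^{ij}_{\alpha\beta}=Y_{\mathbf R'}(\mathcal I)^{ij}_{\alpha\beta}$, then $Y_{\mathbf R}(\mathcal I)^{lm}_{\gamma\delta}=Y_{\mathbf R'}(\mathcal I)^{lm}_{\gamma\delta}$ for all distinct $l,m\in\mathcal I$ and distinct $\gamma,\delta\in\mathcal I^{\mathtt C}$ such that $\chi(\mathcal I\mid^{lm}_{\gamma\delta})$ is observable. That is, given the family $\{h(\mathcal J)\}$, the choice of one root of $F^{ij}_{\alpha\beta}$ as the value of $Y^{ij}_{\alpha\beta}$ determines all Y-terms with basis $\mathcal I$ associated with observable sets.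
   Context: $[n]=\{1,\dots,n\}$, $\wp_k[n]$ the $k$-subsets. For $\mathcal I\in\wp_k[n]$: $\mathcal I^{\mathtt C}=[n]\setminus\mathcal I$; $\mathcal I^i_\alpha=(\mathcal I\setminus\{i\})\cup\{\alpha\}$; $\mathcal I^{ij}_{\alpha\beta}=(\mathcal I\setminus\{i,j\})\cup\{\alpha,\beta\}$. Maximal minors: columns for $k\times n$, rows for $n\times k$ matrices. For an $n\times k$ matrix $\mathbf R$ with nonzero maximal minors, $Y_{\mathbf R}(\mathcal I)^{ij}_{\alpha\beta}:=-\mathrm{sign}[(i-\alpha)(i-\beta)(j-\alpha)(j-\beta)]\frac{\Delta_{\mathbf R}(\mathcal I^i_\alpha)\Delta_{\mathbf R}(\mathcal I^j_\beta)}{\Delta_{\mathbf R}(\mathcal I^i_\beta)\Delta_{\mathbf R}(\mathcal I^j_\alpha)}$ (distinct $i,j\in\mathcal I$, distinct $\alpha,\beta\in\mathcal I^{\mathtt C}$). $\chi(\mathcal I\mid^{ij}_{\alpha\beta}):=\{h(\mathcal I)h(\mathcal I^{ij}_{\alpha\beta}),h(\mathcal I^i_\alpha)h(\mathcal I^j_\beta),h(\mathcal I^i_\beta)h(\mathcal I^j_\alpha)\}$ (multiset), observable if not all entries are $0$. $A^{ij}_{\alpha\beta}:=h(\mathcal I)h(\mathcal I^{ij}_{\alpha\beta})-h(\mathcal I^i_\alpha)h(\mathcal I^j_\beta)-h(\mathcal I^i_\beta)h(\mathcal I^j_\alpha)$ and $F^{ij}_{\alpha\beta}(X):=h(\mathcal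 I^i_\beta)h(\mathcal I^j_\alpha)X^2-A^{ij}_{\alpha\beta}X+h(\mathcal I^i_\alpha)h(\mathcal I^j_\beta)$; one has $F^{ij}_{\alpha\beta}(Y_{\mathbf R}(\mathcal I)^{ij}_{\alpha\beta})=0$. *)

From HB Require Import structures.
From mathcomp Require Import all_boot all_order all_algebra.
Set Implicit Arguments. Unset Strict Implicit. Unset Printing Implicit Defensive.
Import Order.TTheory GRing.Theory Num.Theory.
Local Open Scope ring_scope.

(* k-subsets of [n] are sets J : {set 'I_n} with #|J| = k (indices 0..n-1).
   enum J lists J in increasing order, so the minors below use the natural
   ordering of rows/columns. *)
Section Defs.
Variables (K : fieldType) (k n : nat).

Definition minorL (L : 'M[K]_(k, n)) (J : {set 'I_n}) : K :=
  \det (\matrix_(a < k, b < k) nth 0 [seq L a c | c <- enum J] b).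

Definition minorR (R : 'M[K]_(n, k)) (J : {set 'I_n}) : K :=
  \det (\matrix_(a < k, b < k) nth 0 [seq R r b | r <- enum J] a).

Definition swap1 (I : {set 'I_n}) (i al : 'I_n) : {set 'I_n} := al |: (I :\ i).

Definition swap2 (I : {set 'I_n}) (i j al be : 'I_n) : {set 'I_n} :=
  al |: (be |: ((I :\ i) :\ j)).

Definition hprod (L : 'M[K]_(k, n)) (R : 'M[K]_(n, k)) (J : {set 'I_n}) : K :=
  minorL L J * minorR R J.

Definition Yterm (R : 'M[K]_(n, k)) (I : {set 'I_n}) (i j al be : 'I_n) : K :=
  - ((sgz (((i : nat)%:Z - (al : nat)%:Z) * ((i : nat)%:Z - (be : nat)%:Z)
          * ((j : nat)%:Z - (al : nat)%:Z) * ((j : nat)%:Z - (be : nat)%:Z)))%:~R)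
  * (minorR R (swap1 I i al) * minorR R (swap1 I j be))
  / (minorR R (swap1 I i be) * minorR R (swap1 I j al)).

(* chi(I |^{ij}_{alpha beta}) as a list (multiset) of three values *)
Definition chi (h : {set 'I_n} -> K) (I : {set 'I_n}) (i j al be : 'I_n) : seq K :=
  [:: h I * h (swap2 I i j al be);
      h (swap1 I i al) * h (swap1 I j be);
      h (swap1 I i be) * h (swap1 I j al)].

Definition observable (h : {set 'I_n} -> K) (I : {set 'I_n}) (i j al be : 'I_n) : bool :=
  has (fun x => x != 0) (chi h I i j al be).

Definition Aterm (h : {set 'I_n} -> K) (I : {set 'I_n}) (i j al be : 'I_n) : K :=
  h I * h (swap2 I i j al be) - h (swap1 I i al) * h (swap1 I j be)
  - h (swap1 I i be) * h (swap1 I j al).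

Definition Fpoly (h : {set 'I_n} -> K) (I : {set 'I_n}) (i j al be : 'I_n) : {poly K} :=
  (h (swap1 I i be) * h (swap1 I j al))%:P * 'X^2
  - (Aterm h I i j al be)%:P * 'X
  + (h (swap1 I i al) * h (swap1 I j be))%:P.

End Defs.

(* Write x(r,a) = Delta_R(I^r_a), y(r,a) = Delta_R'(I^r_a) and P(r,a) = h(I^r_a)
   for r in I and a outside I.

   1. Plücker. Expressing rows a, b of R in the basis of the rows indexed by I
      (Cramer's rule) yields the three-term Plücker relation
        Delta(I) Delta(I^{rs}_{ab}) = +- Delta(I^r_a) Delta(I^s_b) +- Delta(I^r_b) Delta(I^s_a).
      Multiplying the relations for L^T and R gives
        h(I) h(I^{rs}_{ab}) = P1 + P2 + e (P1 / rho + P2 rho),  e = +-1,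
      with P1 = P(r,a) P(s,b), P2 = P(r,b) P(s,a) and rho the cross ratio of x.
   2. Since h is the same for (L, R) and (L', R'), the cross ratios rho, rho' of
      x and y satisfy rho = rho' or P2 rho rho' = P1; equivalently y / x or
      x y / P has rank one on the block {r,s} x {a,b}.
   3. The Y-term is rho up to a sign, and F^{rs}_{ab} = (X - e rho)(P2 X - e P1 / rho).
      Two distinct roots at the base block exclude the second alternative there.
   4. A combinatorial argument on I x I^C propagates the first alternative from
      the base block to every observable block. *)

From HB Require Import structures.
From mathcomp Require Import all_boot all_order all_algebra.
From mathcomp Require Import ring.
From Stdlib Require Import Classical_Prop.
Set Implicit Arguments. Unset Strict Implicit. Unset Printing Implicit Defensive.
Import Order.TTheory GRing.Theory Num.Theory.
Local Open Scope ring_scope.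

Section RowReplacement.
Variables (K : fieldType) (k : nat).
Implicit Types (A M : 'M[K]_k) (p q : 'I_k) (u v c d : 'rV[K]_k).

Definition upd_row A p u : 'M[K]_k :=
  \matrix_(i, j) if i == p then u 0 j else A i j.

Lemma det_upd_row_lin2 A p u v (b c : K) :
  \det (upd_row A p (b *: u + c *: v)) =
  b * \det (upd_row A p u) + c * \det (upd_row A p v).
Proof.
apply: (@determinant_multilinear _ _ _ _ _ p).
- by apply/rowP => j; rewrite !mxE eqxx.
- by apply/matrixP => i j; rewrite !mxE eq_sym (negbTE (neq_lift p i)).
- by apply/matrixP => i j; rewrite !mxE eq_sym (negbTE (neq_lift p i)).
Qed.

Lemma det_upd_row_sum A p c (B : 'M[K]_k) :
  \det (upd_row A p (c *m B)) = \sum_i c 0 i * \det (upd_row A p (row i B)).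
Proof.
rewrite mulmx_sum_row.
elim/big_rec2: _ => [|i y1 y2 _ <-].
  by have := det_upd_row_lin2 A p 0 0 0 0; rewrite !scale0r addr0 !mul0r addr0.
by have := det_upd_row_lin2 A p (row i B) y2 (c 0 i) 1; rewrite scale1r mul1r.
Qed.

Lemma upd_row_id A p : upd_row A p (row p A) = A.
Proof. by apply/matrixP => i j; rewrite !mxE; case: eqP => // ->. Qed.

Lemma det_upd_row_dup A p i u : i != p -> row i A = u -> \det (upd_row A p u) = 0.
Proof.
move=> ip <-; apply: (determinant_alternate ip) => j.
by rewrite !mxE eqxx (negbTE ip).
Qed.

Lemma det_upd_row_coord M p c : \det (upd_row M p (c *m M)) = c 0 p * \det M.
Proof.
rewrite det_upd_row_sum (bigD1 p) //= upd_row_id big1 ?addr0 // => i ip.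
by rewrite (det_upd_row_dup ip) ?mulr0.
Qed.

Lemma upd_rowC A p q u v : p != q ->
  upd_row (upd_row A p u) q v = upd_row (upd_row A q v) p u.
Proof.
move=> pq; apply/matrixP => i j; rewrite !mxE.
by case: (eqVneq i q) => [->|iq] //; rewrite eq_sym (negbTE pq).
Qed.

Lemma upd_row_xrow M p q : p != q ->
  upd_row (upd_row M q (row p M)) p (row q M) = xrow p q M.
Proof.
move=> pq; apply/matrixP => i j; rewrite !mxE.
case: perm.tpermP => [->|->|/eqP ip /eqP iq]; first by rewrite eqxx.
  by rewrite eq_sym (negbTE pq) eqxx.
by rewrite (negbTE ip) (negbTE iq).
Qed.

Lemma det_upd_row2_id M p q c : p != q ->
  \det (upd_row (upd_row M p (c *m M)) q (row q M)) = c 0 p * \det M.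
Proof.
move=> pq; rewrite -det_upd_row_coord; congr (\det _); apply/matrixP => i j.
by rewrite !mxE; case: (eqVneq i q) => [->|//]; rewrite eq_sym (negbTE pq).
Qed.

Lemma det_upd_row2_swap M p q c : p != q ->
  \det (upd_row (upd_row M p (c *m M)) q (row p M)) = - (c 0 q * \det M).
Proof.
move=> pq; rewrite upd_rowC // det_upd_row_sum (bigD1 q) //= upd_row_xrow //.
rewrite big1 ?addr0 => [|i iq]; last first.
  (* row i M already occurs in row q if i = p, and in row i otherwise *)
  have dup : row (if i == p then q else i) (upd_row M q (row p M)) = row i M.
    by apply/rowP => j; rewrite !mxE; case: (eqVneq i p) => [->|ip]; rewrite ?eqxx ?(negbTE iq).
  rewrite (det_upd_row_dup _ dup) ?mulr0 //.
  by case: (eqVneq i p) => [_|//]; rewrite eq_sym.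
by rewrite xrowE det_mulmx det_perm perm.odd_tperm pq expr1 mulN1r mulrN.
Qed.

Lemma det_upd_row2_other M p q u i : i != p -> i != q ->
  \det (upd_row (upd_row M p u) q (row i M)) = 0.
Proof.
move=> ip iq; apply: det_upd_row_dup iq _.
by apply/rowP => j; rewrite !mxE (negbTE ip).
Qed.

Lemma det_upd_row2 M p q c d : p != q ->
  \det (upd_row (upd_row M p (c *m M)) q (d *m M)) =
  (c 0 p * d 0 q - c 0 q * d 0 p) * \det M.
Proof.
move=> pq; rewrite det_upd_row_sum (bigD1 q) //= (bigD1 p) ?(eq_sym q) //=.
rewrite big1 ?addr0 => [|i /andP[iq ip]]; last by rewrite det_upd_row2_other ?mulr0.
by rewrite det_upd_row2_id // det_upd_row2_swap //; ring.
Qed.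
End RowReplacement.

Section Exchange.
Variables (n : nat) (I : {set 'I_n}).

Lemma card_swap1 r a : r \in I -> a \notin I -> #|swap1 I r a| = #|I|.
Proof.
move=> rI aI; rewrite /swap1 cardsU1 in_setD1 (negbTE aI) andbF.
by have := cardsD1 r I; rewrite rI => ->.
Qed.

Lemma card_swap2 r s a b : r \in I -> s \in I -> r != s ->
  a \notin I -> b \notin I -> a != b -> #|swap2 I r s a b| = #|I|.
Proof.
move=> rI sI rs aI bI ab.
rewrite /swap2 cardsU1 in_setU1 (negbTE ab) /= !in_setD1 (negbTE aI) !andbF /=.
rewrite cardsU1 !in_setD1 (negbTE bI) !andbF /=.
have := cardsD1 r I; have := cardsD1 s (I :\ r).
by rewrite in_setD1 eq_sym rs sI rI /= => -> ->.
Qed.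
End Exchange.

Section MaximalMinors.
Variables (K : fieldType) (k n : nat).
Implicit Types (R : 'M[K]_(n, k)) (I J : {set 'I_n}).

Definition rows_of R (f : 'I_k -> 'I_n) : 'M[K]_k := \matrix_(i, j) R (f i) j.

Section Enumeration.
Variables (x0 : 'I_n) (J : {set 'I_n}).
Hypothesis cardJ : #|J| = k.

Definition enum_at (i : 'I_k) : 'I_n := nth x0 (enum J) i.

Lemma enum_at_in i : enum_at i \in J.
Proof. by rewrite -mem_enum mem_nth // -cardE cardJ. Qed.

Lemma enum_at_inj : injective enum_at.
Proof.
move=> i1 i2 /eqP; rewrite nth_uniq ?enum_uniq // -?cardE ?cardJ //.
by move/eqP/val_inj.
Qed.

Lemma enum_at_onto y : y \in J -> exists i, enum_at i = y.
Proof.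
move=> yJ; have lt : (index y (enum J) < k)%N by rewrite -cardJ cardE index_mem mem_enum.
by exists (Ordinal lt); rewrite /enum_at nth_index // mem_enum.
Qed.

Lemma minorR_enum R : minorR R J = \det (rows_of R enum_at).
Proof.
rewrite /minorR; congr (\det _); apply/matrixP => i j.
by rewrite !mxE (nth_map x0) // -cardE cardJ.
Qed.

Lemma minorR_reindex (f : 'I_k -> 'I_n) : (forall y, y \in J -> exists i, f i = y) ->
  exists b : bool, forall R, minorR R J = (-1) ^+ b * \det (rows_of R f).
Proof.
move=> f_onto.
pose h i := odflt i [pick j | f j == enum_at i].
have hP i : f (h i) = enum_at i.
  rewrite /h; case: pickP => [j /eqP //|none].
  by have [j fj] := f_onto _ (enum_at_in i); have := none j; rewrite fj eqxx.
have h_inj : injective h by move=> i1 i2 e; apply: enum_at_inj; rewrite -!hP e.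
exists (perm.odd_perm (perm.perm h_inj)) => R; rewrite minorR_enum.
have -> : rows_of R enum_at = row_perm (perm.perm h_inj) (rows_of R f).
  by apply/matrixP => i j; rewrite !mxE perm.permE hP.
by rewrite row_permE det_mulmx det_perm.
Qed.
End Enumeration.

Definition plucker_rel I r s a b (s1 s2 : bool) : Prop :=
  forall R, minorR R I != 0 ->
    minorR R I * minorR R (swap2 I r s a b) =
      (-1) ^+ s1 * (minorR R (swap1 I r a) * minorR R (swap1 I s b)) +
      (-1) ^+ s2 * (minorR R (swap1 I r b) * minorR R (swap1 I s a)).

Section ThreeTermPlucker.
Variables (x0 : 'I_n) (I : {set 'I_n}).
Hypothesis cardI : #|I| = k.
Local Notation e := (enum_at x0 I).

Lemma minorR_swap1 p a : a \notin I ->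
  exists b : bool, forall R,
    minorR R (swap1 I (e p) a) = (-1) ^+ b * \det (upd_row (rows_of R e) p (row a R)).
Proof.
move=> aI; have cardJ : #|swap1 I (e p) a| = k by rewrite card_swap1 ?enum_at_in.
pose f i := if i == p then a else e i.
have f_onto y : y \in swap1 I (e p) a -> exists i, f i = y.
  rewrite /f in_setU1 in_setD1 => /predU1P[->|/andP[yp yI]].
    by exists p; rewrite eqxx.
  have [j ej] := enum_at_onto x0 cardI yI; exists j.
  by case: (eqVneq j p) yp => [<-|//]; rewrite -ej eqxx.
have [b Hb] := minorR_reindex x0 cardJ f_onto.
exists b => R; rewrite Hb; congr (_ * \det _); apply/matrixP => i j.
by rewrite !mxE /f; case: eqP.
Qed.

Lemma minorR_swap2 p q a b : p != q -> a \notin I -> b \notin I -> a != b ->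
  exists s : bool, forall R, minorR R (swap2 I (e p) (e q) a b) =
    (-1) ^+ s * \det (upd_row (upd_row (rows_of R e) p (row a R)) q (row b R)).
Proof.
move=> pq aI bI ab.
have epq : e p != e q by apply: contra pq => /eqP /(enum_at_inj cardI) ->.
have cardJ : #|swap2 I (e p) (e q) a b| = k by rewrite card_swap2 ?enum_at_in.
pose f i := if i == q then b else if i == p then a else e i.
have f_onto y : y \in swap2 I (e p) (e q) a b -> exists i, f i = y.
  rewrite !in_setU1 !in_setD1 => /predU1P[->|/predU1P[->|/and3P[yq yp yI]]].
  - by exists p; rewrite /f (negbTE pq) eqxx.
  - by exists q; rewrite /f eqxx.
  have [j ej] := enum_at_onto x0 cardI yI; exists j; rewrite /f.
  case: (eqVneq j q) yq => [<-|_ _]; first by rewrite -ej eqxx.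
  by case: (eqVneq j p) yp => [<-|//]; rewrite -ej eqxx.
have [s Hs] := minorR_reindex x0 cardJ f_onto.
exists s => R; rewrite Hs; congr (_ * \det _); apply/matrixP => i j.
by rewrite !mxE /f; case: eqP => //; case: eqP.
Qed.

Lemma plucker_at p q a b : p != q -> a \notin I -> b \notin I -> a != b ->
  exists s1 s2, plucker_rel I (e p) (e q) a b s1 s2.
Proof.
move=> pq aI bI ab.
have [b1 H1] := minorR_swap1 p aI; have [b2 H2] := minorR_swap1 q bI.
have [b3 H3] := minorR_swap1 p bI; have [b4 H4] := minorR_swap1 q aI.
have [b5 H5] := minorR_swap2 pq aI bI ab.
exists (b5 (+) b1 (+) b2), (~~ (b5 (+) b3 (+) b4)) => R RI.
have M_unit : rows_of R e \in unitmx by rewrite unitmxE unitfE -minorR_enum.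
(* rows a and b of R in coordinates with respect to the rows of I *)
rewrite H1 H2 H3 H4 H5 (minorR_enum x0 cardI).
rewrite -[row a R](mulmxKV M_unit) -[row b R](mulmxKV M_unit).
rewrite det_upd_row2 // !det_upd_row_coord.
clear H1 H2 H3 H4 H5.
by case: b1; case: b2; case: b3; case: b4; case: b5; rewrite /= ?expr0 ?expr1; ring.
Qed.
End ThreeTermPlucker.

Lemma plucker I r s a b : #|I| = k ->
  r \in I -> s \in I -> r != s -> a \notin I -> b \notin I -> a != b ->
  exists s1 s2, plucker_rel I r s a b s1 s2.
Proof.
move=> cardI rI sI rs aI bI ab.
have [p er] := enum_at_onto r cardI rI; have [q es] := enum_at_onto r cardI sI.
have pq : p != q by apply: contra_neq rs => pq; rewrite -er -es pq.
by have := plucker_at r cardI pq aI bI ab; rewrite er es.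
Qed.
End MaximalMinors.

Section CrossRatios.
Variables (K : fieldType) (n : nat).
Implicit Types (f x y p : 'I_n -> 'I_n -> K) (r s a b : 'I_n).

Definition cross_ratio f r s a b : K := f r a * f s b / (f r b * f s a).

Definition rank1 f r s a b : Prop := f r a * f s b = f r b * f s a.

Lemma eq_iff_scaled_diff (u v w z c : K) :
  c != 0 -> u - v = (w - z) * c -> (u = v <-> w = z).
Proof.
move=> c0 e; split=> [uv|wz]; last by apply/eqP; rewrite -subr_eq0 e wz subrr mul0r.
apply/eqP; rewrite -subr_eq0; move: e; rewrite uv subrr => /esym/eqP.
by rewrite mulf_eq0 (negbTE c0) orbF.
Qed.

Lemma rank1_quotient x y r s a b :
  x r a != 0 -> x s b != 0 -> x r b != 0 -> x s a != 0 ->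
  y r b != 0 -> y s a != 0 ->
  rank1 (fun r a => y r a / x r a) r s a b <->
  cross_ratio y r s a b = cross_ratio x r s a b.
Proof.
move=> n1 n2 n3 n4 m3 m4; apply: (eq_iff_scaled_diff (c := y r b * y s a / (x r a * x s b))).
  by rewrite !mulf_neq0 ?invr_neq0 ?mulf_neq0.
by rewrite /cross_ratio; field; rewrite n1 n2 n3 n4 m3 m4.
Qed.

Lemma rank1_product x y p r s a b :
  x r a != 0 -> x s b != 0 -> x r b != 0 -> x s a != 0 ->
  y r a != 0 -> y s b != 0 -> y r b != 0 -> y s a != 0 ->
  p r a != 0 -> p s b != 0 -> p r b != 0 -> p s a != 0 ->
  rank1 (fun r a => x r a * y r a / p r a) r s a b <->
  p r b * p s a * cross_ratio x r s a b * cross_ratio y r s a b = p r a * p s b.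
Proof.
move=> n1 n2 n3 n4 m1 m2 m3 m4 q1 q2 q3 q4.
apply: (eq_iff_scaled_diff
  (c := x r b * x s a * (y r b * y s a) / (p r a * p s b * (p r b * p s a)))).
  by rewrite !mulf_neq0 ?invr_neq0 ?mulf_neq0.
by rewrite /cross_ratio; field; rewrite n3 n4 m3 m4 q1 q2 q3 q4.
Qed.

Lemma same_sum_dichotomy (P1 P2 rho rho' : K) : rho != 0 -> rho' != 0 ->
  P1 / rho + P2 * rho = P1 / rho' + P2 * rho' ->
  rho = rho' \/ P2 * rho * rho' = P1.
Proof.
move=> r0 r0' eq_sum.
have : (rho - rho') * (P2 * rho * rho' - P1) = 0.
  transitivity ((P1 / rho + P2 * rho - (P1 / rho' + P2 * rho')) * rho * rho').
    by field; rewrite r0 r0'.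
  by rewrite eq_sum subrr !mul0r.
by move/eqP; rewrite mulf_eq0 !subr_eq0 => /orP[] /eqP; [left|right].
Qed.

(* The quadratic P2 X^2 - e (P1 / rho + P2 rho) X + P1 (with e = +-1) has the
   roots e rho and e P1 / (P2 rho). *)
Lemma two_roots (e P1 P2 rho u v : K) : e ^+ 2 = 1 -> rho != 0 ->
  P1 != 0 \/ P2 != 0 -> u != v ->
  P2 * u ^+ 2 - e * (P1 / rho + P2 * rho) * u + P1 = 0 ->
  P2 * v ^+ 2 - e * (P1 / rho + P2 * rho) * v + P1 = 0 ->
  P2 != 0 /\ P2 * rho ^+ 2 != P1.
Proof.
move=> e2 r0 nontriv uv hu hv.
have factor w : P2 * w ^+ 2 - e * (P1 / rho + P2 * rho) * w + P1 =
    (w - e * rho) * (P2 * w - e * P1 / rho).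
  rewrite -[P1 in P2 * w ^+ 2 - _ + P1]mul1r -e2; field; exact: r0.
(* in the degenerate cases every root equals e rho *)
have single : P2 = 0 \/ P2 * rho ^+ 2 = P1 ->
    forall w, P2 * w ^+ 2 - e * (P1 / rho + P2 * rho) * w + P1 = 0 -> w = e * rho.
  move=> degenerate w; rewrite factor => /eqP; rewrite mulf_eq0 subr_eq0.
  case/orP => [/eqP //|]; case: degenerate => [P20|P1E].
    have e0 : e != 0 by apply: contra_eq_neq e2 => ->; rewrite expr0n eq_sym oner_eq0.
    rewrite P20 mul0r sub0r oppr_eq0 !mulf_eq0 invr_eq0 (negbTE e0) (negbTE r0) orbF /=.
    by move=> /eqP P10; case: nontriv; rewrite ?P10 ?P20 eqxx.
  have -> : e * P1 / rho = P2 * (e * rho) by rewrite -P1E; field.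
  rewrite -mulrBr mulf_eq0 subr_eq0 => /orP[/eqP P20|/eqP //].
  by move: nontriv; rewrite -P1E P20 mul0r eqxx; case.
have clash : ~ (P2 = 0 \/ P2 * rho ^+ 2 = P1).
  by move=> deg; move: uv; rewrite (single deg u hu) (single deg v hv) eqxx.
by split; apply/negP => /eqP deg; apply: clash; [left|right].
Qed.
End CrossRatios.

Section MinorProducts.
Variables (K : fieldType) (k n : nat).

Definition exch (F : {set 'I_n} -> K) (I : {set 'I_n}) (r a : 'I_n) : K :=
  F (swap1 I r a).

Lemma minorL_tr (L : 'M[K]_(k, n)) J : minorL L J = minorR L^T J.
Proof.
rewrite /minorL /minorR -det_tr; congr (\det _); apply/matrixP => a b.
by rewrite !mxE; congr nth; apply: eq_map => c; rewrite mxE.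
Qed.

Lemma hprod_swap2 (L : 'M[K]_(k, n)) (R : 'M[K]_(n, k)) I r s a b s1 s2 :
  @plucker_rel K k n I r s a b s1 s2 ->
  minorL L I != 0 -> minorR R I != 0 ->
  minorR R (swap1 I r a) != 0 -> minorR R (swap1 I s b) != 0 ->
  minorR R (swap1 I r b) != 0 -> minorR R (swap1 I s a) != 0 ->
  let P := exch (hprod L R) I in let rho := cross_ratio (exch (minorR R) I) r s a b in
  hprod L R I * hprod L R (swap2 I r s a b) =
    P r a * P s b + P r b * P s a +
    (-1) ^+ (s1 (+) s2) * (P r a * P s b / rho + P r b * P s a * rho).
Proof.
move=> pl LI RI n1 n2 n3 n4 P rho.
rewrite /P /rho /exch /cross_ratio /hprod !minorL_tr.
transitivity ((minorR L^T I * minorR L^T (swap2 I r s a b)) *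
              (minorR R I * minorR R (swap2 I r s a b))); first ring.
rewrite !pl -?minorL_tr //.
by clear pl; case: s1; case: s2; rewrite /= ?expr0 ?expr1; field; rewrite n1 n2 n3 n4.
Qed.
End MinorProducts.

Lemma cover_by_two_relations (T : Type) (D : T -> Prop) (R1 R2 : T -> T -> Prop) :
  (forall u v, D u -> D v -> R1 u v -> R1 v u) ->
  (forall u v, D u -> D v -> R2 u v -> R2 v u) ->
  (forall u v w, D u -> D v -> D w -> R1 u v -> R1 v w -> R1 u w) ->
  (forall u v w, D u -> D v -> D w -> R2 u v -> R2 v w -> R2 u w) ->
  (forall u v, D u -> D v -> R1 u v \/ R2 u v) ->
  (forall u v, D u -> D v -> R1 u v) \/ (forall u v, D u -> D v -> R2 u v).
Proof.
move=> sym1 sym2 tr1 tr2 cover.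
case: (classic (exists u v, [/\ D u, D v & ~ R1 u v])) => [[u [v [Du Dv nR1uv]]]|none]; last first.
  by left=> u v Du Dv; apply: NNPP => nR1uv; apply: none; exists u, v.
have R2uv : R2 u v by case: (cover u v Du Dv).
(* every x is R2-related to u: otherwise x would be R1-related to both u and v *)
have R2u x : D x -> R2 u x.
  move=> Dx; case: (cover u x Du Dx) => // R1ux.
  case: (cover v x Dv Dx) => [R1vx|R2vx]; last exact: tr2 R2uv R2vx.
  by case: nR1uv; apply: tr1 R1ux (sym1 _ _ Dv Dx R1vx).
by right=> w z Dw Dz; apply: tr2 (sym2 _ _ Du Dw (R2u w Dw)) (R2u z Dz).
Qed.

Section RankOne.
Variables (K : fieldType) (n : nat).
Implicit Types (f : 'I_n -> 'I_n -> K) (r s t a b c : 'I_n).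

Lemma rank1_rows_eq f r a b : rank1 f r r a b.
Proof. by rewrite /rank1 mulrC. Qed.

Lemma rank1_cols_eq f r s a : rank1 f r s a a.
Proof. by []. Qed.

Lemma rank1_symr f r s a b : rank1 f r s a b -> rank1 f s r a b.
Proof. by rewrite /rank1 => e; rewrite mulrC -e mulrC. Qed.

Lemma rank1_symc f r s a b : rank1 f r s a b -> rank1 f r s b a.
Proof. by rewrite /rank1 => ->. Qed.

Lemma rank1_transr f r s t a b : f s a != 0 -> f s b != 0 ->
  rank1 f r s a b -> rank1 f s t a b -> rank1 f r t a b.
Proof.
rewrite /rank1 => h1 h2 e1 e2; apply: (mulIf (mulf_neq0 h1 h2)).
transitivity ((f r a * f s b) * (f s a * f t b)); first ring.
by rewrite e1 e2; ring.
Qed.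

Lemma rank1_transc f r s a b c : f r b != 0 -> f s b != 0 ->
  rank1 f r s a b -> rank1 f r s b c -> rank1 f r s a c.
Proof.
rewrite /rank1 => h1 h2 e1 e2; apply: (mulIf (mulf_neq0 h1 h2)).
transitivity ((f r a * f s b) * (f r b * f s c)); first ring.
by rewrite e1 e2; ring.
Qed.

Lemma rank1_pivot f l m r g d a : f r a != 0 ->
  rank1 f l r g a -> rank1 f m r g a -> rank1 f l r d a -> rank1 f m r d a ->
  rank1 f l m g d.
Proof.
rewrite /rank1 => h e1 e2 e3 e4; apply: (mulIf (mulf_neq0 h h)).
transitivity ((f l g * f r a) * (f m d * f r a)); first ring.
rewrite e1 e4; symmetry.
transitivity ((f l d * f r a) * (f m g * f r a)); first ring.
by rewrite e3 e2; ring.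
Qed.
End RankOne.

Section Propagation.
Variables (K : fieldType) (n : nat) (I : {set 'I_n}) (phi mu p : 'I_n -> 'I_n -> K).
Hypothesis phi_neq0 : forall r a, r \in I -> a \notin I -> phi r a != 0.
Hypothesis mu_neq0 : forall r a, r \in I -> a \notin I -> p r a != 0 -> mu r a != 0.
Hypothesis dichotomy : forall r s a b, r \in I -> s \in I -> a \notin I -> b \notin I ->
  p r a * p s b != 0 \/ p r b * p s a != 0 ->
  rank1 phi r s a b \/ [/\ p r a * p s b != 0, p r b * p s a != 0 & rank1 mu r s a b].

Lemma dichotomy_diag r s a b : r \in I -> s \in I -> a \notin I -> b \notin I ->
  p r a * p s b != 0 -> p r b * p s a = 0 -> rank1 phi r s a b.
Proof.
move=> rI sI aI bI h1 h2.
by case: (dichotomy rI sI aI bI (or_introl h1)) => // -[_]; rewrite h2 eqxx.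
Qed.

Lemma dichotomy_antidiag r s a b : r \in I -> s \in I -> a \notin I -> b \notin I ->
  p r a * p s b = 0 -> p r b * p s a != 0 -> rank1 phi r s a b.
Proof.
move=> rI sI aI bI h1 h2.
by case: (dichotomy rI sI aI bI (or_intror h2)) => // -[]; rewrite h1 eqxx.
Qed.

Lemma rank1_or_cross r s a b : r \in I -> s \in I -> a \notin I -> b \notin I ->
  p r a != 0 -> p s b != 0 -> rank1 phi r s a b \/ (p r b != 0 /\ p s a != 0).
Proof.
move=> rI sI aI bI h1 h2.
case: (dichotomy rI sI aI bI (or_introl (mulf_neq0 h1 h2))) => [|[_]]; first by left.
by rewrite mulf_eq0 negb_or => /andP[? ?] _; right.
Qed.

(* Suppose the block {l, m} x {ga, de}, with p nonzero on it, is not of rank one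
   for phi. Then the rows B and columns A on which p does not vanish at the
   block form a full rectangle of p, on which mu is of rank one. *)
Section Obstruction.
Variables (l m ga de : 'I_n).
Hypotheses (lI : l \in I) (mI : m \in I) (gaI : ga \notin I) (deI : de \notin I).
Hypotheses (plg : p l ga != 0) (pmd : p m de != 0) (pld : p l de != 0) (pmg : p m ga != 0).
Hypothesis not_phi : ~ rank1 phi l m ga de.

Local Notation inA a := [/\ a \notin I, p l a != 0 & p m a != 0].
Local Notation inB r := [/\ r \in I, p r ga != 0 & p r de != 0].

Lemma no_pivot r a : r \in I -> a \notin I ->
  rank1 phi l r ga a -> rank1 phi m r ga a -> rank1 phi l r de a -> rank1 phi m r de a ->
  False.
Proof. by move=> rI aI e1 e2 e3 e4; apply: not_phi; apply: (rank1_pivot (phi_neq0 rI aI)). Qed.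

Lemma col_support a : a \notin I -> (p l a != 0) = (p m a != 0).
Proof.
move=> aI; apply/idP/idP => pa; apply/negP => /eqP p0;
  apply: (no_pivot mI aI); rewrite ?p0; try exact: rank1_rows_eq.
- by apply: dichotomy_antidiag; rewrite ?p0 ?mulr0 // mulf_neq0.
- by apply: dichotomy_antidiag; rewrite ?p0 ?mulr0 // mulf_neq0.
- by apply: dichotomy_diag; rewrite ?p0 ?mul0r // mulf_neq0.
- by apply: dichotomy_diag; rewrite ?p0 ?mul0r // mulf_neq0.
Qed.

Lemma row_support r : r \in I -> (p r ga != 0) = (p r de != 0).
Proof.
move=> rI; apply/idP/idP => pr; apply/negP => /eqP p0;
  apply: (no_pivot rI deI); try exact: rank1_cols_eq.
- by apply: dichotomy_antidiag; rewrite ?p0 ?mulr0 // mulf_neq0.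
- by apply: dichotomy_antidiag; rewrite ?p0 ?mulr0 // mulf_neq0.
- by apply: dichotomy_diag; rewrite ?p0 ?mulr0 // mulf_neq0.
- by apply: dichotomy_diag; rewrite ?p0 ?mulr0 // mulf_neq0.
Qed.

Lemma support_edge r a : r \in I -> a \notin I -> p r a != 0 -> inB r /\ inA a.
Proof.
move=> rI aI pra; split.
  have [prg0|prg] := eqVneq (p r ga) 0; last by split; rewrite // -row_support.
  have prd0 : p r de = 0 by apply/eqP/negbFE; rewrite -row_support // prg0 eqxx.
  exfalso; apply: (no_pivot rI aI).
  - by case: (rank1_or_cross lI rI gaI aI plg pra) => // -[_]; rewrite prg0 eqxx.
  - by case: (rank1_or_cross mI rI gaI aI pmg pra) => // -[_]; rewrite prg0 eqxx.
  - by case: (rank1_or_cross lI rI deI aI pld pra) => // -[_]; rewrite prd0 eqxx.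
  - by case: (rank1_or_cross mI rI deI aI pmd pra) => // -[_]; rewrite prd0 eqxx.
have [pla0|pla] := eqVneq (p l a) 0; last by split; rewrite // -col_support.
have pma0 : p m a = 0 by apply/eqP/negbFE; rewrite -col_support // pla0 eqxx.
exfalso; apply: (no_pivot rI aI).
- by case: (rank1_or_cross lI rI gaI aI plg pra) => // -[]; rewrite pla0 eqxx.
- by case: (rank1_or_cross mI rI gaI aI pmg pra) => // -[]; rewrite pma0 eqxx.
- by case: (rank1_or_cross lI rI deI aI pld pra) => // -[]; rewrite pla0 eqxx.
- by case: (rank1_or_cross mI rI deI aI pmd pra) => // -[]; rewrite pma0 eqxx.
Qed.

Lemma support_full r a : inB r -> inA a -> p r a != 0.
Proof.
move=> [rI prg prd] [aI pla pma]; apply/negP => /eqP pra.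
by apply: (no_pivot rI aI); apply: dichotomy_antidiag; rewrite ?pra ?mulr0 // mulf_neq0.
Qed.

Lemma block_row_pair r s : inB r -> inB s ->
  (forall a b, inA a -> inA b -> rank1 phi r s a b) \/
  (forall a b, inA a -> inA b -> rank1 mu r s a b).
Proof.
move=> Br Bs; have [rI _ _] := Br; have [sI _ _] := Bs.
apply: (@cover_by_two_relations _ (fun a => inA a) (rank1 phi r s) (rank1 mu r s)).
- by move=> a b _ _; apply: rank1_symc.
- by move=> a b _ _; apply: rank1_symc.
- move=> a b c _ [bI _ _] _ e1 e2.
  by apply: (rank1_transc _ _ e1 e2); apply: phi_neq0.
- move=> a b c _ Ab _ e1 e2; have [bI _ _] := Ab.
  by apply: (rank1_transc _ _ e1 e2); apply: mu_neq0; rewrite // support_full.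
move=> a b Aa Ab; have [aI _ _] := Aa; have [bI _ _] := Ab.
have nz : p r a * p s b != 0 by rewrite mulf_neq0 // support_full.
by case: (dichotomy rI sI aI bI (or_introl nz)) => [|[_ _]]; [left|right].
Qed.

(* Hence all pairs of rows of B are of the mu kind, since the pair l, m is not
   of the phi kind. *)
Lemma block_rank1_mu :
  forall r s, inB r -> inB s -> forall a b, inA a -> inA b -> rank1 mu r s a b.
Proof.
pose R1 r s := forall a b, inA a -> inA b -> rank1 phi r s a b.
pose R2 r s := forall a b, inA a -> inA b -> rank1 mu r s a b.
have [phi_block|//] : (forall r s, inB r -> inB s -> R1 r s) \/
    (forall r s, inB r -> inB s -> R2 r s).
  apply: (@cover_by_two_relations _ (fun r => inB r) R1 R2).
  - by move=> r s _ _ h a b Aa Ab; apply/rank1_symr/h.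
  - by move=> r s _ _ h a b Aa Ab; apply/rank1_symr/h.
  - move=> r s t _ [sI _ _] _ h1 h2 a b Aa Ab; have [aI _ _] := Aa; have [bI _ _] := Ab.
    by apply: (rank1_transr (s := s)); [exact: phi_neq0 | exact: phi_neq0 | exact: h1 | exact: h2].
  - move=> r s t _ Bs _ h1 h2 a b Aa Ab; have [sI _ _] := Bs.
    have [aI _ _] := Aa; have [bI _ _] := Ab.
    apply: (rank1_transr (s := s)); [| | exact: h1 | exact: h2];
      by rewrite mu_neq0 // support_full.
  - exact: block_row_pair.
by case: not_phi; apply: phi_block.
Qed.
End Obstruction.

(* If the block {i, j} x {al, be} has nonzero anti-diagonal of p and is not of
   rank one for mu whenever its diagonal of p is nonzero, then phi has rank one
   on every nontrivial block: a failing block would put {i, j} x {al, be} inside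
   its rectangle B x A, where mu has rank one. *)
Lemma rank1_propagation i j al be l m ga de :
  i \in I -> j \in I -> al \notin I -> be \notin I ->
  l \in I -> m \in I -> ga \notin I -> de \notin I ->
  p i be * p j al != 0 -> (p i al * p j be != 0 -> ~ rank1 mu i j al be) ->
  p l ga * p m de != 0 \/ p l de * p m ga != 0 -> rank1 phi l m ga de.
Proof.
move=> iI jI alI beI lI mI gaI deI base not_mu_base nontriv.
case: (dichotomy lI mI gaI deI nontriv) => [//|[]].
rewrite !mulf_eq0 !negb_or => /andP[plg pmd] /andP[pld pmg] _.
case: (eqVneq (phi l ga * phi m de) (phi l de * phi m ga)) => [//|/eqP not_phi].
move: base; rewrite mulf_eq0 negb_or => /andP[pib pja].
have [Bi Abe] := support_edge lI mI gaI deI plg pmd pld pmg not_phi iI beI pib.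
have [Bj Aal] := support_edge lI mI gaI deI plg pmd pld pmg not_phi jI alI pja.
exfalso; apply: not_mu_base.
  by rewrite mulf_neq0 // (support_full lI mI gaI deI not_phi).
exact: (block_rank1_mu lI mI gaI deI plg pmd pld pmg not_phi).
Qed.
End Propagation.

Section YTerms.
Variables (K : fieldType) (k n : nat) (I : {set 'I_n}).

Lemma sign_intr_neq0 (z : int) : z != 0 -> (sgz z)%:~R != 0 :> K.
Proof.
move=> nz; rewrite /sgz (negbTE nz); case: ifP => _.
  by rewrite mulrN1z oppr_eq0 oner_eq0.
by rewrite mulr1z oner_eq0.
Qed.

Lemma index_diff_neq0 (i al : 'I_n) : i \in I -> al \notin I ->
  (i : nat)%:Z - (al : nat)%:Z != 0.
Proof.
move=> iI alI; rewrite subr_eq0 eqz_nat; apply: contraNneq alI => /val_inj <- //.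
Qed.

(* Y_R(I)^{ij}_{al be} is the cross ratio of the exchanged minors of R, up to a
   nonzero sign depending only on the indices; so two matrices have the same
   Y-term exactly when they have the same cross ratio. *)
Lemma Yterm_eq_cross_ratio (R R' : 'M[K]_(n, k)) i j al be :
  i \in I -> j \in I -> al \notin I -> be \notin I ->
  Yterm R I i j al be = Yterm R' I i j al be <->
  cross_ratio (exch (minorR R) I) i j al be = cross_ratio (exch (minorR R') I) i j al be.
Proof.
move=> iI jI alI beI.
pose sign : K := - (sgz (((i : nat)%:Z - (al : nat)%:Z) * ((i : nat)%:Z - (be : nat)%:Z)
          * ((j : nat)%:Z - (al : nat)%:Z) * ((j : nat)%:Z - (be : nat)%:Z)))%:~R.
have sign_neq0 : sign != 0.
  by rewrite oppr_eq0 sign_intr_neq0 // !mulf_neq0 // index_diff_neq0.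
have YE (S : 'M[K]_(n, k)) :
    Yterm S I i j al be = sign * cross_ratio (exch (minorR S) I) i j al be.
  by rewrite /Yterm /cross_ratio /exch !mulrA.
by rewrite !YE; split=> [/(mulfI sign_neq0)|->].
Qed.
End YTerms.

Lemma root_Fpoly_expansion (K : fieldType) n (F : {set 'I_n} -> K) I r s a b e rho w :
  let P := exch F I in let P1 := P r a * P s b in let P2 := P r b * P s a in
  F I * F (swap2 I r s a b) = P1 + P2 + e * (P1 / rho + P2 * rho) ->
  root (Fpoly F I r s a b) w = (P2 * w ^+ 2 - e * (P1 / rho + P2 * rho) * w + P1 == 0).
Proof.
move=> P P1 P2 expand; rewrite /root /Fpoly /Aterm !hornerE expand /P1 /P2 /P /exch.
by congr (_ == 0); ring.
Qed.

Section SameMinorProducts.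
Variables (K : fieldType) (k n : nat) (L L' : 'M[K]_(k, n)) (R R' : 'M[K]_(n, k)).
Hypothesis R_neq0 : forall J : {set 'I_n}, #|J| = k -> minorR R J != 0.
Hypothesis R'_neq0 : forall J : {set 'I_n}, #|J| = k -> minorR R' J != 0.
Hypothesis same_h : forall J : {set 'I_n}, #|J| = k -> hprod L R J = hprod L' R' J.
Variable I : {set 'I_n}.
Hypotheses (cardI : #|I| = k) (hI : hprod L R I != 0).

Local Notation h := (hprod L R).
Local Notation P := (exch h I).
Local Notation x := (exch (minorR R) I).
Local Notation y := (exch (minorR R') I).
Local Notation phi := (fun r a => y r a / x r a).
Local Notation mu := (fun r a => x r a * y r a / P r a).

Lemma x_neq0 r a : r \in I -> a \notin I -> x r a != 0.
Proof. by move=> rI aI; rewrite R_neq0 // card_swap1. Qed.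

Lemma y_neq0 r a : r \in I -> a \notin I -> y r a != 0.
Proof. by move=> rI aI; rewrite R'_neq0 // card_swap1. Qed.

Lemma phi_neq0 r a : r \in I -> a \notin I -> phi r a != 0.
Proof. by move=> rI aI; rewrite mulf_neq0 ?invr_neq0 ?x_neq0 ?y_neq0. Qed.

Lemma mu_neq0 r a : r \in I -> a \notin I -> P r a != 0 -> mu r a != 0.
Proof. by move=> rI aI Pra; rewrite !mulf_neq0 ?invr_neq0 ?x_neq0 ?y_neq0. Qed.

(* Both factorizations of h give the same expansion of h(I) h(I^{rs}_{ab}),
   hence the same value of P1 / rho + P2 rho for the two cross ratios. *)
Lemma swap2_expansion r s a b :
  r \in I -> s \in I -> r != s -> a \notin I -> b \notin I -> a != b ->
  let P1 := P r a * P s b in let P2 := P r b * P s a in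
  exists e : K, [/\ e ^+ 2 = 1,
    h I * h (swap2 I r s a b) =
      P1 + P2 + e * (P1 / cross_ratio x r s a b + P2 * cross_ratio x r s a b) &
    P1 / cross_ratio x r s a b + P2 * cross_ratio x r s a b =
      P1 / cross_ratio y r s a b + P2 * cross_ratio y r s a b].
Proof.
move=> rI sI rs aI bI ab P1 P2.
have [s1 [s2 pl]] := plucker K cardI rI sI rs aI bI ab.
have L_I : minorL L I != 0 by move: hI; rewrite /hprod mulf_eq0 negb_or => /andP[].
have L'_I : minorL L' I != 0.
  by move: hI; rewrite same_h // /hprod mulf_eq0 negb_or => /andP[].
have expR := hprod_swap2 pl L_I (R_neq0 cardI)
  (x_neq0 rI aI) (x_neq0 sI bI) (x_neq0 rI bI) (x_neq0 sI aI).
have expR' := hprod_swap2 pl L'_I (R'_neq0 cardI)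
  (y_neq0 rI aI) (y_neq0 sI bI) (y_neq0 rI bI) (y_neq0 sI aI).
have sameP t c : t \in I -> c \notin I -> exch (hprod L' R') I t c = P t c.
  by move=> tI cI; rewrite /exch same_h // card_swap1.
rewrite /= !sameP -?same_h ?card_swap2 // in expR'.
exists ((-1) ^+ (s1 (+) s2)); split; rewrite ?sqrr_sign //.
have sign_neq0 : (-1) ^+ (s1 (+) s2) != 0 :> K by rewrite signr_eq0.
by move: expR'; rewrite expR => /addrI /(mulfI sign_neq0).
Qed.

Lemma rank1_dichotomy r s a b : r \in I -> s \in I -> a \notin I -> b \notin I ->
  P r a * P s b != 0 \/ P r b * P s a != 0 ->
  rank1 phi r s a b \/ [/\ P r a * P s b != 0, P r b * P s a != 0 & rank1 mu r s a b].
Proof.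
move=> rI sI aI bI nontriv.
have [<-|rs] := eqVneq r s; first by left; apply: rank1_rows_eq.
have [<-|ab] := eqVneq a b; first by left; apply: rank1_cols_eq.
have [? [_ _ same_sum]] := swap2_expansion rI sI rs aI bI ab.
have xr := x_neq0 rI; have xs := x_neq0 sI; have yr := y_neq0 rI; have ys := y_neq0 sI.
have cr_neq0 (f : 'I_n -> 'I_n -> K) : (forall t c, t \in I -> c \notin I -> f t c != 0) ->
    cross_ratio f r s a b != 0.
  by move=> f_neq0; rewrite !mulf_neq0 ?invr_neq0 ?mulf_neq0 ?f_neq0.
case: (same_sum_dichotomy (cr_neq0 _ x_neq0) (cr_neq0 _ y_neq0) same_sum) => [eq_cr|other].
  by left; apply/rank1_quotient; rewrite ?xr ?xs ?yr ?ys // eq_cr.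
have P2_of_P1 : (P r b * P s a == 0) = (P r a * P s b == 0).
  rewrite -other [_ * cross_ratio y _ _ _ _ == 0]mulf_eq0 (negbTE (cr_neq0 _ y_neq0)).
  by rewrite [_ * cross_ratio x _ _ _ _ == 0]mulf_eq0 (negbTE (cr_neq0 _ x_neq0)) !orbF.
have P1 : P r a * P s b != 0 by case: nontriv => //; rewrite P2_of_P1.
have P2 : P r b * P s a != 0 by rewrite P2_of_P1.
have [Pra Psb] : P r a != 0 /\ P s b != 0 by apply/andP; rewrite -negb_or -mulf_eq0.
have [Prb Psa] : P r b != 0 /\ P s a != 0 by apply/andP; rewrite -negb_or -mulf_eq0.
by right; split=> //; apply/rank1_product; rewrite ?xr ?xs ?yr ?ys.
Qed.

Lemma observable_nontrivial r s a b :
  r \in I -> s \in I -> r != s -> a \notin I -> b \notin I -> a != b ->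
  observable h I r s a b -> P r a * P s b != 0 \/ P r b * P s a != 0.
Proof.
move=> rI sI rs aI bI ab; rewrite /observable /chi /= orbF.
have [? [_ -> _]] := swap2_expansion rI sI rs aI bI ab.
have [P10|] := eqVneq (P r a * P s b) 0; last by left.
have [P20|] := eqVneq (P r b * P s a) 0; last by right.
by rewrite /exch in P10 P20; rewrite P10 P20 !mul0r !add0r mulr0 eqxx.
Qed.

(* At a block where F^{rs}_{ab} has two distinct roots and R, R' have the same
   cross ratio, the anti-diagonal of P is nonzero and mu is not of rank one:
   otherwise the cross ratio would be a double root of F. *)
Lemma base_block r s a b u v :
  r \in I -> s \in I -> r != s -> a \notin I -> b \notin I -> a != b ->
  observable h I r s a b -> u != v ->
  root (Fpoly h I r s a b) u -> root (Fpoly h I r s a b) v ->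
  cross_ratio x r s a b = cross_ratio y r s a b ->
  P r b * P s a != 0 /\ (P r a * P s b != 0 -> ~ rank1 mu r s a b).
Proof.
move=> rI sI rs aI bI ab obs uv ru rv same_cr.
have nontriv := observable_nontrivial rI sI rs aI bI ab obs.
have [e [e2 expand _]] := swap2_expansion rI sI rs aI bI ab.
have cr_neq0 : cross_ratio x r s a b != 0.
  by rewrite !mulf_neq0 ?invr_neq0 ?mulf_neq0 ?x_neq0.
rewrite !(root_Fpoly_expansion _ expand) in ru rv.
have [P2 not_double] := two_roots e2 cr_neq0 nontriv uv (eqP ru) (eqP rv).
split=> // P1; have [Pra Psb] : P r a != 0 /\ P s b != 0.
  by apply/andP; rewrite -negb_or -mulf_eq0.
have [Prb Psa] : P r b != 0 /\ P s a != 0 by apply/andP; rewrite -negb_or -mulf_eq0.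
move=> mu_rank1; move: not_double.
have := rank1_product (x_neq0 rI aI) (x_neq0 sI bI) (x_neq0 rI bI) (x_neq0 sI aI)
  (y_neq0 rI aI) (y_neq0 sI bI) (y_neq0 rI bI) (y_neq0 sI aI) Pra Psb Prb Psa.
by move=> /iffLR/(_ mu_rank1) <-; rewrite -same_cr expr2 mulrA eqxx.
Qed.
End SameMinorProducts.

Theorem mainTheorem17 (K : fieldType) (k n : nat)
  (L L' : 'M[K]_(k, n)) (R R' : 'M[K]_(n, k)) :
  (forall J : {set 'I_n}, #|J| = k -> minorR R J != 0) ->
  (forall J : {set 'I_n}, #|J| = k -> minorR R' J != 0) ->
  (forall J : {set 'I_n}, #|J| = k -> hprod L R J = hprod L' R' J) ->
  forall I : {set 'I_n}, #|I| = k -> hprod L R I != 0 ->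
  forall i j al be : 'I_n,
    i \in I -> j \in I -> i != j -> al \notin I -> be \notin I -> al != be ->
    observable (hprod L R) I i j al be ->
    (exists x y : K, [/\ x != y, root (Fpoly (hprod L R) I i j al be) x
                       & root (Fpoly (hprod L R) I i j al be) y]) ->
    Yterm R I i j al be = Yterm R' I i j al be ->
  forall l m ga de : 'I_n,
    l \in I -> m \in I -> l != m -> ga \notin I -> de \notin I -> ga != de ->
    observable (hprod L R) I l m ga de ->
    Yterm R I l m ga de = Yterm R' I l m ga de.
Proof.
move=> R_neq0 R'_neq0 same_h I cardI hI i j al be iI jI ij alI beI albe obs_base
  [u [v [uv ru rv]]] Y_base l m ga de lI mI lm gaI deI gade obs.
have same_cr := (Yterm_eq_cross_ratio R R' iI jI alI beI).1 Y_base.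
apply/(Yterm_eq_cross_ratio R R' lI mI gaI deI); symmetry.
apply/rank1_quotient; rewrite ?(x_neq0 R_neq0 cardI) ?(y_neq0 R'_neq0 cardI) //.
have [base_P2 base_not_mu] := base_block R_neq0 R'_neq0 same_h cardI hI
  iI jI ij alI beI albe obs_base uv ru rv same_cr.
apply: (rank1_propagation (phi_neq0 R_neq0 R'_neq0 cardI) (mu_neq0 R_neq0 R'_neq0 cardI)
  (rank1_dichotomy R_neq0 R'_neq0 same_h cardI hI)
  iI jI alI beI lI mI gaI deI base_P2 base_not_mu).
exact: (observable_nontrivial R_neq0 R'_neq0 same_h cardI hI lI mI lm gaI deI gade obs).
Qed.
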